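(* Let $P=(T;U,V)$ be a 3M-DAP with $t=u=v=2$, and let $\lambda = x_u - x_v$. Then there exists a feasible solution of $P$ all of whose entries lie in the open interval $\left(\frac{x_t+\lambda}{2}, \frac{x_t-\lambda}{2}\right)$; in particular $f(P) > (x_t+\lambda)/2$.
   Context: A three-matrix division and assignment problem (3M-DAP) $P=(T;U,V)$ is specified by integers $t,u,v$ (numbers of columns), integers $s_t, s_u, s_v$ (numbers of rows) and rationals $x_t, x_u, x_v$ (required row sums), subject to: $t \ge 2$, $u \ge 2$, $v \ge 1$; if $v = 1$ then $v s_v \le (t-2)s_t$; $s_t > 0$, $s_u > 0$, $s_v \ge 0$; $s_u u + s_v v = s_t t$; $s_u x_u + s_v x_v = s_t x_t$; and $x_u/u < x_v/v$. A feasible solution assigns real values to the entries of an $s_t\times t$ matrix $T$, an $s_u \times u$ matrix $U$ and an $s_v \times v$ matrix $V$ so that every row of $T$, $U$, $V$ sums to $x_t$, $x_u$, $x_v$ respectively, and the multiset of entries of $T$ equals the multiset union of the entries of $U$ and $V$. $f(P)$ is the maximum, over feasible solutions, of the smallest entry of $T$. *)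

From HB Require Import structures.
From mathcomp Require Import all_boot all_order all_algebra.
From mathcomp Require Import reals.
Set Implicit Arguments. Unset Strict Implicit. Unset Printing Implicit Defensive.
Import Order.TTheory GRing.Theory Num.Theory.
Local Open Scope ring_scope.

(* A three-matrix division and assignment problem P = (T;U,V):
   column counts t u v, row counts st su sv, row sums xt xu xv. *)
Definition is3MDAP (t u v st su sv : nat) (xt xu xv : rat) : Prop :=
  [/\ (2 <= t)%N /\ (2 <= u)%N /\ (1 <= v)%N,
      (v = 1%N -> (v * sv <= (t - 2) * st)%N),
      (0 < st)%N /\ (0 < su)%N,
      (su * u + sv * v = st * t)%N /\
      su%:R * xu + sv%:R * xv = st%:R * xt
    & xu / u%:R < xv / v%:R].

Definition entries (R : Type) (m n : nat) (M : 'M[R]_(m, n)) : seq R :=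
  [seq M i j | i <- enum 'I_m, j <- enum 'I_n].

Definition feasible (R : realType) (t u v st su sv : nat) (xt xu xv : rat)
  (T : 'M[R]_(st, t)) (U : 'M[R]_(su, u)) (V : 'M[R]_(sv, v)) : Prop :=
  [/\ forall i, \sum_j T i j = ratr xt,
      forall i, \sum_j U i j = ratr xu,
      forall i, \sum_j V i j = ratr xv
    & perm_eq (entries T) (entries U ++ entries V)].

From HB Require Import structures.
From mathcomp Require Import all_boot all_order all_algebra.
From mathcomp Require Import reals.
From mathcomp Require Import zify ring lra.
Import Order.TTheory GRing.Theory Num.Theory.
Local Open Scope ring_scope.

(* Take the st terms of the arithmetic progression with common difference
   d = (xv - xu) / st centred at xt / 2; they lie strictly within st * d / 2
   = - lam / 2 of xt / 2.  Put the first su terms into U and the other sv into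
   V, each row of a block pairing its i-th smallest with its i-th largest term,
   and lay out all st terms in T the same way.  All rows of a block then have
   the same sum, xt shifted by d times the offset of the block's centre from
   the centre of the progression: 0 for T, - sv * d = xu - xt for U and
   su * d = xv - xt for V. *)

Lemma entries_map_mx (S T : Type) (f : S -> T) m n (M : 'M[S]_(m, n)) :
  entries (map_mx f M) = map f (entries M).
Proof.
by rewrite /entries map_allpairs; apply: eq_allpairs => i j; rewrite mxE.
Qed.

Lemma perm_entries_col2 {T : eqType} {m} (M : 'M[T]_(m, 2)) :
  perm_eq (entries M)
    ([seq M i ord0 | i <- enum 'I_m] ++ [seq M i ord_max | i <- enum 'I_m]).
Proof.
rewrite /entries enum_ordSl enum_ordSl enum_ord0.
rewrite perm_allpairs_consr perm_cat2l perm_allpairs_consr.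
have -> : lift ord0 ord0 = ord_max :> 'I_2 by exact: val_inj.
by rewrite -[X in perm_eq _ X]cats0 perm_cat2l; elim: (enum 'I_m).
Qed.

Section PairMatrix.

Context {T : eqType} (Y : nat -> T).

Definition pair_mx (m k : nat) : 'M[T]_(k, 2) :=
  \matrix_(i, j) Y (m + (if j == ord0 then i : nat else rev_ord i))%N.

Lemma perm_map_rev_ord k (F : 'I_k -> T) :
  perm_eq [seq F (rev_ord i) | i <- enum 'I_k] [seq F i | i <- enum 'I_k].
Proof.
rewrite (map_comp F (@rev_ord k)); apply: perm_map; apply: uniq_perm.
- by rewrite (map_inj_uniq rev_ord_inj) enum_uniq.
- exact: enum_uniq.
move=> i; rewrite mem_enum; apply/mapP; exists (rev_ord i).
  by rewrite mem_enum.
by rewrite rev_ordK.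
Qed.

Lemma map_pair_mx_col0 m k :
  [seq pair_mx m k i ord0 | i <- enum 'I_k] = map Y (iota m k).
Proof.
rewrite -[m in iota m k]addn0 iotaDl -val_enum_ord -!map_comp.
by apply: eq_map => i; rewrite /= mxE.
Qed.

Lemma perm_entries_pair_mx m k :
  perm_eq (entries (pair_mx m k)) (map Y (iota m k ++ iota m k)).
Proof.
rewrite (permPl (perm_entries_col2 (pair_mx m k))).
rewrite map_cat -map_pair_mx_col0 perm_cat2l.
rewrite (eq_map (g := fun i => pair_mx m k (rev_ord i) ord0)).
  exact: perm_map_rev_ord.
by move=> i; rewrite !mxE.
Qed.

Lemma perm_entries_pair_mx_cat m k1 k2 :
  perm_eq (entries (pair_mx m (k1 + k2)))
    (entries (pair_mx m k1) ++ entries (pair_mx (m + k1) k2)).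
Proof.
rewrite (permPl (perm_entries_pair_mx _ _)) perm_sym.
rewrite (permPl (perm_cat (perm_entries_pair_mx _ _) (perm_entries_pair_mx _ _))).
by rewrite -map_cat; apply: perm_map; rewrite iotaD -!catA perm_cat2l perm_catCA.
Qed.

Lemma mem_entries_pair_mx m k x :
  (x \in entries (pair_mx m k)) = (x \in map Y (iota m k)).
Proof. by rewrite (perm_mem (perm_entries_pair_mx m k)) map_cat mem_cat orbb. Qed.

End PairMatrix.

Section CentredProgression.

Context {F : realFieldType}.

Definition centred_ap (n : nat) (s d : F) (j : nat) : F :=
  s / 2 + (j%:R - (n%:R - 1) / 2) * d.

Lemma centred_apD n s d i j :
  centred_ap n s d i + centred_ap n s d j = s + ((i + j)%:R - (n%:R - 1)) * d.
Proof. by rewrite /centred_ap natrD; field. Qed.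

Lemma centred_ap_bound n s d j : (j < n)%N -> 0 < d ->
  (s - n%:R * d) / 2 < centred_ap n s d j < (s + n%:R * d) / 2.
Proof.
move=> lt_jn d_gt0; rewrite /centred_ap.
have j_ge0 : 0 <= j%:R * d :> F by rewrite mulr_ge0 ?ler0n ?ltW.
have jn : (j%:R + 1) * d <= n%:R * d :> F.
  by rewrite ler_pM2r // natr1 ler_nat.
apply/andP; split; lra.
Qed.

Lemma pair_mx_centred_ap_row_sum n s d m k (i : 'I_k) :
  \sum_j pair_mx (centred_ap n s d) m k i j = s + ((m.*2 + k)%:R - n%:R) * d.
Proof.
rewrite !big_ord_recl big_ord0 addr0 !mxE /= centred_apD.
have -> : (m + i + (m + (k - i.+1)) = (m.*2 + k).-1)%N.
  by have := ltn_ord i; lia.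
rewrite -subn1 natrB; last by have := ltn_ord i; lia.
by congr (_ + _ * _); rewrite opprB addrA subrK.
Qed.

End CentredProgression.

Lemma feasible_map_ratr (R : realType) t u v st su sv (xt xu xv : rat)
    (T : 'M[rat]_(st, t)) (U : 'M[rat]_(su, u)) (V : 'M[rat]_(sv, v)) :
  (forall i, \sum_j T i j = xt) -> (forall i, \sum_j U i j = xu) ->
  (forall i, \sum_j V i j = xv) ->
  perm_eq (entries T) (entries U ++ entries V) ->
  feasible xt xu xv (map_mx (ratr : rat -> R) T) (map_mx ratr U) (map_mx ratr V).
Proof.
move=> sumT sumU sumV permTUV.
split=> [i|i|i|]; rewrite ?entries_map_mx.
- by rewrite -(sumT i) rmorph_sum; apply: eq_bigr => j _; rewrite mxE.
- by rewrite -(sumU i) rmorph_sum; apply: eq_bigr => j _; rewrite mxE.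
- by rewrite -(sumV i) rmorph_sum; apply: eq_bigr => j _; rewrite mxE.
by rewrite -map_cat perm_map.
Qed.

Theorem lemma6 (R : realType) (st su sv : nat) (xt xu xv : rat) :
  is3MDAP 2 2 2 st su sv xt xu xv ->
  let lam := xu - xv in
  exists (T : 'M[R]_(st, 2)) (U : 'M[R]_(su, 2)) (V : 'M[R]_(sv, 2)),
    feasible xt xu xv T U V /\
    (forall y, y \in entries T ++ entries U ++ entries V ->
       ratr ((xt + lam) / 2) < y < ratr ((xt - lam) / 2)).
Proof.
move=> [_ _ [st_gt0 _] [Ecount Esum] lt_x] lam.
have Est : st = (su + sv)%N by lia.
have st_neq0 : st%:R != 0 :> rat by rewrite pnatr_eq0 -lt0n.
pose d := (xv - xu) / st%:R.
have Ed : st%:R * d = xv - xu by rewrite mulrC divfK.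
have d_gt0 : 0 < d by rewrite divr_gt0 ?ltr0n // subr_gt0; lra.
pose Y := centred_ap st xt d.
have xtE : xt = (su%:R * xu + sv%:R * xv) / st%:R by rewrite Esum mulrAC divff // mul1r.
exists (map_mx ratr (pair_mx Y 0 st)), (map_mx ratr (pair_mx Y 0 su)),
       (map_mx ratr (pair_mx Y su sv)).
have perm_TUV : perm_eq (entries (pair_mx Y 0 st))
    (entries (pair_mx Y 0 su) ++ entries (pair_mx Y su sv)).
  by rewrite Est perm_entries_pair_mx_cat.
split.
  apply: feasible_map_ratr => [i|i|i|]; rewrite ?pair_mx_centred_ap_row_sum.
  - by rewrite subrr mul0r addr0.
  - by rewrite xtE /d Est double0 add0n !natrD; field; rewrite -natrD -Est.
  - by rewrite xtE /d Est -addnn !natrD; field; rewrite -natrD -Est.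
  exact: perm_TUV.
move=> y; rewrite !entries_map_mx -!map_cat => /mapP [x x_in ->].
have : x \in entries (pair_mx Y 0 st).
  by move: x_in; rewrite mem_cat -(perm_mem perm_TUV) orbb.
rewrite mem_entries_pair_mx => /mapP [j]; rewrite mem_iota => /andP [_ lt_j ->].
rewrite !ltr_rat /lam -opprB -Ed opprK.
exact: centred_ap_bound.
Qed.
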